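(* Let $\varepsilon\in(0,1]$, $L\in[0,\infty)$, $q\in(1,\infty)$, let $f\colon\mathbb R\to\mathbb R$ satisfy $|f(x)-f(y)|\le L|x-y|$ for all $x,y\in\mathbb R$, and let $a\in C(\mathbb R,\mathbb R)$ satisfy $a(x)=\ln(1+\exp(x))$ for all $x\in\mathbb R$. Then there exists $\mathbf G\in\mathbf N$ such that (i) $\mathcal R_a(\mathbf G)\in C(\mathbb R,\mathbb R)$; (ii) $\mathcal H(\mathbf G)=1$; (iii) $|(\mathcal R_a(\mathbf G))(x)-(\mathcal R_a(\mathbf G))(y)|\le L|x-y|$ for all $x,y\in\mathbb R$; (iv) $|(\mathcal R_a(\mathbf G))(x)-f(x)|\le2\varepsilon\max\{1,|x|^q\}$ for all $x\in\mathbb R$; (v) $\mathbb D_1(\mathbf G)\le2(\max\{1,2L\})^{q/(q-1)}\varepsilon^{-q/(q-1)}+1$; and (vi) $\mathcal P(\mathbf G)=3\mathbb D_1(\mathbf G)+1\le12(\max\{1,2L\})^{q/(q-1)}\varepsilon^{-q/(q-1)}$.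
   Context: Artificial neural networks (ANNs). Let $\mathbb N=\{1,2,\dots\}$ and $\mathbf N=\bigcup_{L\in\mathbb N}\bigcup_{l_0,\dots,l_L\in\mathbb N}\prod_{k=1}^L(\mathbb R^{l_k\times l_{k-1}}\times\mathbb R^{l_k})$. For $\Phi=((W_1,B_1),\dots,(W_L,B_L))$ in the $(l_0,\dots,l_L)$ component, $\mathcal P(\Phi)=\sum_{k=1}^Ll_k(l_{k-1}+1)$, $\mathcal H(\Phi)=L-1$, $\mathbb D_1(\Phi)=l_1$. For $a\in C(\mathbb R,\mathbb R)$ the realization $\mathcal R_a(\Phi)\colon\mathbb R^{l_0}\to\mathbb R^{l_L}$ is $(\mathcal R_a(\Phi))(x_0)=W_Lx_{L-1}+B_L$ with $x_k=\mathfrak M_{a,l_k}(W_kx_{k-1}+B_k)$, $k=1,\dots,L-1$, where $\mathfrak M_{a,m}$ applies $a$ componentwise. *)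

From HB Require Import structures.
From mathcomp Require Import all_boot all_order all_algebra.
From mathcomp Require Import all_classical all_reals all_analysis.
Set Implicit Arguments. Unset Strict Implicit. Unset Printing Implicit Defensive.
Import Order.TTheory GRing.Theory Num.Theory.
Local Open Scope ring_scope.

(* A value of [net R l0 lL] is a tuple
   ((W_1,B_1),...,(W_L,B_L)) with W_k : 'M_(l_k, l_{k-1}), B_k : 'cV_(l_k),
   input dimension l0 and output dimension lL.  [Affine] is the last layer,
   [Layer W B rest] prepends a (hidden-producing) layer. *)
Inductive net (R : realType) : nat -> nat -> Type :=
| Affine (m n : nat) (W : 'M[R]_(n, m)) (B : 'cV[R]_n) : net R m n
| Layer (m n k : nat) (W : 'M[R]_(n, m)) (B : 'cV[R]_n) (rest : net R n k) : net R m k.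

Fixpoint realization (R : realType) (a : R -> R) (m k : nat) (G : net R m k)
  : 'cV[R]_m -> 'cV[R]_k :=
  match G in net _ m k return 'cV[R]_m -> 'cV[R]_k with
  | Affine _ _ W B => fun x => W *m x + B
  | Layer _ _ _ W B rest => fun x => realization a rest (map_mx a (W *m x + B))
  end.

Fixpoint nparams (R : realType) (m k : nat) (G : net R m k) : nat :=
  match G with
  | Affine m n _ _ => (n * (m + 1))%N
  | Layer m n _ _ _ rest => (n * (m + 1) + nparams rest)%N
  end.

Fixpoint nhidden (R : realType) (m k : nat) (G : net R m k) : nat :=
  match G with
  | Affine _ _ _ _ => 0%N
  | Layer _ _ _ _ _ rest => (nhidden rest).+1
  end.

Definition dim1 (R : realType) (m k : nat) (G : net R m k) : nat :=
  match G with
  | Affine _ n _ _ => n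
  | Layer _ n _ _ _ _ => n
  end.

Definition realization11 (R : realType) (a : R -> R) (G : net R 1 1) (x : R) : R :=
  realization a G (const_mx x) ord0 ord0.

From HB Require Import structures.
From mathcomp Require Import all_boot all_order all_algebra.
From mathcomp Require Import all_classical all_reals all_analysis.
From mathcomp Require Import ring lra.
Import Order.TTheory GRing.Theory Num.Theory numFieldNormedType.Exports.
Set Implicit Arguments. Unset Strict Implicit.
Local Open Scope ring_scope.

(* The piecewise linear interpolant of f at the N + 1 equidistant knots
   x_j = -r + 2 j r / N is f(x_0) plus a combination of shifted ReLUs with
   slopes bounded by L; it is within L δ of f on [-r, r] and within L |x|
   outside.  Replacing max(t, 0) by the rescaled softplus ln(1 + e^(k t)) / k,
   which is within 1 / k of it, yields a network with one hidden layer of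
   width N + 1.  The rescaled softplus is nondecreasing, 1-Lipschitz and convex,
   so the interpolating sum stays L-Lipschitz.  With A = max(1, 2L) / ε the
   radius r = A^(1/(q-1)) makes L |x| <= ε |x|^q for |x| >= r, and
   N ~ r A = A^(q/(q-1)) knots make L δ <= ε. *)

Section Activations.
Variable R : realType.
Implicit Types s t c : R.

Definition relu (t : R) : R := Num.max t 0.

Lemma ger0_relu t : 0 <= t -> relu t = t.
Proof. by move=> t0; rewrite /relu max_l. Qed.

Lemma ler0_relu t : t <= 0 -> relu t = 0.
Proof. by move=> t0; rewrite /relu max_r. Qed.

Definition softplus (t : R) : R := ln (1 + expR t).

Let onepexpR_gt0 (t : R) : 0 < 1 + expR t.
Proof. by rewrite ltr_wpDr ?expR_ge0. Qed.

Lemma softplus_relu_dist t : `|softplus t - relu t| <= 1.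
Proof.
have le_ln (y z : R) : 0 < y -> y <= expR z -> ln y <= z.
  by move=> y0 yz; rewrite -[z in _ <= z]expRK ler_ln ?posrE ?expR_gt0.
have ge_ln (y z : R) : 0 < y -> expR z <= y -> z <= ln y.
  by move=> y0 yz; rewrite -[z in z <= _]expRK ler_ln ?posrE ?expR_gt0.
rewrite ger0_norm; last first.
  rewrite subr_ge0 ge_ln // /relu; case: (leP t 0) => t0.
    by rewrite expR0 lerDl expR_ge0.
  by rewrite lerDr.
rewrite lerBlDl le_ln // expRD.
have e2 : 2 <= expR (1 : R) by rewrite -[2]/(1 + 1 : R) expR_ge1Dx.
have h1 : expR t <= expR (relu t) by rewrite ler_expR le_max lexx.
have h2 : 1 <= expR (relu t) by rewrite -expR0 ler_expR le_max lexx orbT.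
have := expR_ge0 t; nra.
Qed.

Lemma softplus_nondecreasing : {homo softplus : s t / s <= t}.
Proof. by move=> s t st; rewrite ler_ln ?posrE // lerD2l ler_expR. Qed.

Lemma softplus_incr_le s t : s <= t -> softplus t - softplus s <= t - s.
Proof.
move=> st; rewrite lerBlDr /softplus -[t - s]expRK -lnM ?posrE ?expR_gt0 //.
rewrite ler_ln ?posrE ?mulr_gt0 ?expR_gt0 // mulrDr mulr1 -expRD subrK.
have : 1 <= expR (t - s) by rewrite -expR0 ler_expR subr_ge0.
have := expR_ge0 t; nra.
Qed.

(* convexity, in the form of increments over intervals of a fixed length *)
Lemma softplus_incr_convex s t c : s <= t -> 0 <= c ->
  softplus s - softplus (s - c) <= softplus t - softplus (t - c).
Proof.
move=> st c0; rewrite lerBlDr addrAC lerBrDr /softplus -!lnM ?posrE //.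
rewrite ler_ln ?posrE ?mulr_gt0 // !expRD.
have S := expR_ge0 s; have ST : expR s <= expR t by rewrite ler_expR.
have C1 : expR (- c) <= 1 by rewrite -expR0 ler_expR oppr_le0.
have := expR_ge0 (- c); nra.
Qed.

Definition rescale (rho : R -> R) (k t : R) : R := rho (k * t) / k.

Section Rescale.
Variables (rho : R -> R) (k : R).
Hypothesis k_gt0 : 0 < k.

Lemma rescale_nondecreasing : {homo rho : s t / s <= t} ->
  {homo rescale rho k : s t / s <= t}.
Proof. by move=> rho_le s t st; rewrite ler_pM2r ?invr_gt0 // rho_le // ler_pM2l. Qed.

Lemma rescale_incr_le : (forall s t, s <= t -> rho t - rho s <= t - s) ->
  forall s t, s <= t -> rescale rho k t - rescale rho k s <= t - s.
Proof.
move=> rho_lip s t st; rewrite -mulrBl ler_pdivrMr // [_ * k]mulrBl.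
by rewrite ![_ * k]mulrC rho_lip // ler_pM2l.
Qed.

Lemma rescale_incr_convex :
  (forall s t c, s <= t -> 0 <= c -> rho s - rho (s - c) <= rho t - rho (t - c)) ->
  forall s t c, s <= t -> 0 <= c ->
    rescale rho k s - rescale rho k (s - c) <= rescale rho k t - rescale rho k (t - c).
Proof.
move=> rho_cvx s t c st c0; rewrite -!mulrBl ler_pM2r ?invr_gt0 // !mulrBr.
by apply: rho_cvx; [rewrite ler_pM2l | exact: mulr_ge0 (ltW k_gt0) c0].
Qed.

Lemma rescale_relu_dist c : (forall t, `|rho t - relu t| <= c) ->
  forall t, `|rescale rho k t - relu t| <= c / k.
Proof.
move=> rho_relu t; have -> : relu t = relu (k * t) / k.
  by rewrite /relu -[0 in RHS](mulr0 k) -maxr_pMr ?ltW // mulrC mulKf ?lt0r_neq0.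
by rewrite /rescale -mulrBl normrM normfV (gtr0_norm k_gt0) ler_pM2r ?invr_gt0.
Qed.
End Rescale.
End Activations.

Arguments relu {R}.
Arguments softplus {R}.

Lemma lipschitz_continuous (R : realType) (g : R -> R) (L : R) : 0 <= L ->
  (forall x y, `|g x - g y| <= L * `|x - y|) -> continuous g.
Proof.
move=> L0 g_lip x; apply/cvgrPdist_lt => e e0.
have eL : 0 < e / (L + 1) by rewrite divr_gt0 // ltr_wpDl.
near=> y; apply: le_lt_trans (g_lip x y) _.
have : `|x - y| < e / (L + 1) by near: y; exact: cvgr_dist_lt.
rewrite ltr_pdivlMr ?ltr_wpDl //; have := normr_ge0 (x - y); nra.
Unshelve. all: end_near.
Qed.

Lemma lerp_dist (R : realType) (f : R -> R) (L u v x : R) : 0 <= L ->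
  (forall x y, `|f x - f y| <= L * `|x - y|) -> u < v -> u <= x <= v ->
  `|f u + (f v - f u) / (v - u) * (x - u) - f x| <= L * (v - u).
Proof.
move=> L0 f_lip uv /andP[ux xv]; have vu0 : 0 < v - u by rewrite subr_gt0.
set l := (x - u) / (v - u).
have l0 : 0 <= l by rewrite divr_ge0 ?subr_ge0 // ltW.
have l1 : 0 <= 1 - l by rewrite subr_ge0 ler_pdivrMr // mul1r lerD2r.
have -> : f u + (f v - f u) / (v - u) * (x - u) - f x =
    (1 - l) * (f u - f x) + l * (f v - f x).
  by rewrite /l; field; rewrite lt0r_neq0.
have fu : `|f u - f x| <= L * (v - u).
  apply: le_trans (f_lip _ _) _; rewrite ler_wpM2l // distrC ger0_norm ?subr_ge0 //.
  by rewrite lerD2r.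
have fv : `|f v - f x| <= L * (v - u).
  apply: le_trans (f_lip _ _) _; rewrite ler_wpM2l // ger0_norm ?subr_ge0 //.
  by rewrite lerD2l lerN2.
apply: le_trans (ler_normD _ _) _; rewrite normrM (ger0_norm l1) normrM (ger0_norm l0).
apply: le_trans (lerD (ler_wpM2l l1 fu) (ler_wpM2l l0 fv)) _.
by rewrite -mulrDl subrK mul1r.
Qed.

Section Interpolation.
Variables (R : realType) (f : R -> R) (x0 δ : R) (N : nat).
Implicit Types (rho : R -> R) (x y t : R).

Definition knot (i : nat) : R := x0 + i%:R * δ.

Definition slope (i : nat) : R := (f (knot i.+1) - f (knot i)) / δ.

Definition interp rho x : R :=
  f x0 + \sum_(i < N) slope i * (rho (x - knot i) - rho (x - knot i.+1)).

Lemma knot0 : knot 0 = x0.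
Proof. by rewrite /knot mul0r addr0. Qed.

Lemma knotS i : knot i.+1 = knot i + δ.
Proof. by rewrite /knot -addn1 natrD mulrDl mul1r addrA. Qed.

Hypothesis δ_gt0 : 0 < δ.

Lemma knot_le i j : (i <= j)%N -> knot i <= knot j.
Proof. by move=> ij; rewrite /knot lerD2l ler_wpM2r ?ler_nat // ltW. Qed.

Variable L : R.
Hypotheses (L_ge0 : 0 <= L) (f_lip : forall x y, `|f x - f y| <= L * `|x - y|).

Lemma norm_slope_le i : `|slope i| <= L.
Proof.
rewrite /slope normrM normfV (gtr0_norm δ_gt0) ler_pdivrMr //.
apply: le_trans (f_lip _ _) _.
by rewrite [knot i.+1]knotS addrAC subrr add0r gtr0_norm.
Qed.

Lemma interp_lipschitz rho :
  {homo rho : s t / s <= t} ->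
  (forall s t, s <= t -> rho t - rho s <= t - s) ->
  (forall s t c, s <= t -> 0 <= c -> rho s - rho (s - c) <= rho t - rho (t - c)) ->
  forall x y, `|interp rho x - interp rho y| <= L * `|x - y|.
Proof.
move=> rho_le rho_lip rho_cvx x y.
wlog yx : x y / y <= x.
  move=> H; case: (leP y x) => [/H//|/ltW/H].
  by rewrite distrC [`|y - x|]distrC.
pose bump i t := rho (t - knot i) - rho (t - knot i.+1).
have bump_incr i : 0 <= bump i x - bump i y.
  have shift t : t - knot i.+1 = t - knot i - δ by rewrite knotS opprD addrA.
  by rewrite subr_ge0 /bump !shift rho_cvx ?lerD2r // ltW.
have -> : interp rho x - interp rho y = \sum_(i < N) slope i * (bump i x - bump i y).
  rewrite /interp opprD addrACA subrr add0r -sumrB.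
  by apply: eq_bigr => i _; rewrite -mulrBr.
have bump_sum : \sum_(i < N) (bump i x - bump i y) =
    (rho (x - x0) - rho (y - x0)) - (rho (x - knot N) - rho (y - knot N)).
  pose u i := rho (x - knot i) - rho (y - knot i).
  rewrite -(big_mkord xpredT (fun i => bump i x - bump i y)).
  rewrite (telescope_sumr_eq (fun i => - u i)) // => [|i _].
    by rewrite /u knot0; ring.
  by rewrite /u /bump; ring.
apply: le_trans (ler_norm_sum _ _ _) _.
apply: (@le_trans _ _ (\sum_(i < N) L * (bump i x - bump i y))).
  apply: ler_sum => i _; rewrite normrM (ger0_norm (bump_incr i)).
  by rewrite ler_wpM2r ?norm_slope_le.
rewrite -mulr_sumr bump_sum ler_wpM2l // ger0_norm ?subr_ge0 //.
have head_le : rho (x - x0) - rho (y - x0) <= x - y.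
  have -> : x - y = (x - x0) - (y - x0) by ring.
  by rewrite rho_lip // lerD2r.
have tail_ge : rho (y - knot N) <= rho (x - knot N) by rewrite rho_le // lerD2r.
lra.
Qed.

Lemma interp_dist rho sigma c : (forall t, `|rho t - sigma t| <= c) ->
  forall x, `|interp rho x - interp sigma x| <= N%:R * (L * (2 * c)).
Proof.
move=> rho_sigma x; rewrite /interp opprD addrACA subrr add0r -sumrB.
apply: le_trans (ler_norm_sum _ _ _) _.
rewrite [leRHS]mulr_natl -[in leRHS](card_ord N) -sumr_const; apply: ler_sum => i _.
rewrite -mulrBr normrM ler_pM ?norm_slope_le //.
set a := x - knot i; set b := x - knot i.+1.
have -> : rho a - rho b - (sigma a - sigma b) = (rho a - sigma a) - (rho b - sigma b).
  by ring.
by rewrite mulrDl mul1r (le_trans (ler_normB _ _)) ?lerD.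
Qed.

Let relu_term x i := slope i * (relu (x - knot i) - relu (x - knot i.+1)).

Lemma relu_interp_partial j x : knot j <= x ->
  \sum_(0 <= i < j) relu_term x i = f (knot j) - f x0.
Proof.
move=> jx; rewrite -[in RHS]knot0.
apply: (telescope_sumr_eq (fun i => f (knot i))) => // i /andP[_ ij].
have iSx : knot i.+1 <= x by apply: le_trans jx; exact: knot_le.
rewrite /relu_term !ger0_relu ?subr_ge0 //; last by apply: le_trans iSx; exact: knot_le.
have -> : x - knot i - (x - knot i.+1) = δ by rewrite knotS; ring.
by rewrite /slope mulfVK ?lt0r_neq0.
Qed.

Lemma relu_interp_left x : x <= x0 -> interp relu x = f x0.
Proof.
move=> xx0; rewrite /interp big1 ?addr0 // => i _.
rewrite !ler0_relu ?subrr ?mulr0 // subr_le0 (le_trans xx0) // -{1}knot0;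
  exact: knot_le.
Qed.

Lemma relu_interp_right x : knot N <= x -> interp relu x = f (knot N).
Proof.
move=> Nx; rewrite /interp -(big_mkord xpredT (relu_term x)) relu_interp_partial //.
by rewrite addrC subrK.
Qed.

Lemma relu_interp_segment j x : (j < N)%N -> knot j <= x <= knot j.+1 ->
  interp relu x = f (knot j) + slope j * (x - knot j).
Proof.
move=> jN /andP[jx xjS]; rewrite /interp -(big_mkord xpredT (relu_term x)).
rewrite (big_cat_nat _ (n := j)) //= ?(ltnW jN) // relu_interp_partial //.
rewrite big_ltn // big_nat_cond big1 => [|i /andP[/andP[ji _] _]].
  rewrite /relu_term (ger0_relu (t := x - _)) ?subr_ge0 // ler0_relu ?subr_le0 //.
  by rewrite subr0 addr0 addrA [f x0 + _]addrC subrK.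
rewrite /relu_term !ler0_relu ?subrr ?mulr0 // subr_le0 (le_trans xjS) // knot_le //.
exact: ltnW.
Qed.

Lemma knot_segment x : x0 <= x < knot N ->
  exists2 j, (j < N)%N & knot j <= x <= knot j.+1.
Proof.
move=> /andP[x0x xN]; have t0 : 0 <= (x - x0) / δ by rewrite divr_ge0 ?subr_ge0 // ltW.
have /andP[jx xjS] := truncn_itv t0; exists (Num.truncn ((x - x0) / δ)).
  rewrite -(ltr_nat R); apply: le_lt_trans jx _.
  by rewrite ltr_pdivrMr // ltrBlDl.
by rewrite /knot -lerBrDl -ler_pdivlMr // jx -lerBlDl -ler_pdivrMr // ltW.
Qed.

Lemma relu_interp_dist_in x : x0 <= x <= knot N -> `|interp relu x - f x| <= L * δ.
Proof.
case/andP=> x0x; rewrite le_eqVlt => /orP[/eqP-> | xN].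
  by rewrite relu_interp_right // subrr normr0 mulr_ge0 // ltW.
have [j jN jx] : exists2 j, (j < N)%N & knot j <= x <= knot j.+1.
  by apply: knot_segment; rewrite x0x.
rewrite (relu_interp_segment jN jx) /slope.
have <- : knot j.+1 - knot j = δ by rewrite knotS addrAC subrr add0r.
by apply: lerp_dist; rewrite // knotS ltrDl.
Qed.

Lemma relu_interp_dist_out x : x0 <= 0 -> 0 <= knot N ->
  (x <= x0) || (knot N <= x) -> `|interp relu x - f x| <= L * `|x|.
Proof.
move=> x00 N0 /orP[xx0 | Nx].
  rewrite relu_interp_left //; apply: le_trans (f_lip _ _) _.
  rewrite ler_wpM2l // ger0_norm ?subr_ge0 // ler0_norm ?(le_trans xx0) //.
  by rewrite lerBlDr addrC subrr.
rewrite relu_interp_right //; apply: le_trans (f_lip _ _) _.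
rewrite ler_wpM2l // distrC ger0_norm ?subr_ge0 // ger0_norm ?(le_trans N0) //.
by rewrite gerBl.
Qed.
End Interpolation.

Section Network.
Variables (R : realType) (f : R -> R) (x0 δ : R) (N : nat).

Definition slope_jump (j : nat) : R :=
  (if (j < N)%N then slope f x0 δ j else 0) - (if j is i.+1 then slope f x0 δ i else 0).

Lemma interp_knot_sum (rho : R -> R) x :
  interp f x0 δ N rho x = f x0 + \sum_(j < N.+1) slope_jump j * rho (x - knot x0 δ j).
Proof.
congr (_ + _); rewrite /slope_jump.
under [RHS]eq_bigr => j _ do rewrite mulrBl.
rewrite sumrB big_ord_recr big_ord_recl /= ltnn mul0r addr0 mul0r add0r -sumrB.
by apply: eq_bigr => i _; rewrite ltn_ord mulrBr.
Qed.

Definition softplus_net (k : R) : net R 1 1 :=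
  Layer (const_mx k : 'M[R]_(N.+1, 1)) (\col_(j < N.+1) - (k * knot x0 δ j))
    (Affine (\row_(j < N.+1) (slope_jump j / k)) (const_mx (f x0))).

Lemma nparams_softplus_net k : nparams (softplus_net k) = (3 * N.+1 + 1)%N.
Proof. by rewrite /=; ring. Qed.

Lemma realization11_softplus_net (a : R -> R) k x : a =1 softplus ->
  realization11 a (softplus_net k) x = interp f x0 δ N (rescale softplus k) x.
Proof.
move=> aE; rewrite interp_knot_sum /realization11 /= !mxE addrC; congr (_ + _).
apply: eq_bigr => j _; rewrite !mxE big_ord1 !mxE aE /rescale.
by rewrite mulrBr mulrA mulrAC.
Qed.
End Network.

Section SymmetricGrid.
Variables (R : realType) (a f : R -> R) (L eps r : R) (N : nat).
Hypotheses (a_softplus : a =1 softplus) (eps_gt0 : 0 < eps) (L_ge0 : 0 <= L)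
  (r_gt0 : 0 < r) (N_gt0 : (0 < N)%N)
  (f_lip : forall x y, `|f x - f y| <= L * `|x - y|).

Let δ := 2 * r / N%:R.
(* L + 1 rather than L keeps the softplus sharpness k positive when L = 0 *)
Let k := 2 * N%:R * (L + 1) / eps.
Let G := realization11 a (softplus_net f (- r) δ N k).

Let δ_gt0 : 0 < δ. Proof. by rewrite divr_gt0 ?mulr_gt0 ?ltr0n. Qed.
Let k_gt0 : 0 < k. Proof. by rewrite divr_gt0 ?mulr_gt0 ?ltr0n ?ltr_wpDl. Qed.
Let last_knot : knot (- r) δ N = r.
Proof. by rewrite /knot /δ mulrC mulfVK ?pnatr_eq0 -?lt0n //; ring. Qed.

Lemma softplus_net_lipschitz x y : `|G x - G y| <= L * `|x - y|.
Proof.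
rewrite /G !realization11_softplus_net //; apply: interp_lipschitz => //.
- exact/rescale_nondecreasing/softplus_nondecreasing.
- exact/rescale_incr_le/softplus_incr_le.
- exact/rescale_incr_convex/softplus_incr_convex.
Qed.

Let G_relu_dist x : `|G x - interp f (- r) δ N relu x| <= eps.
Proof.
rewrite /G realization11_softplus_net //.
have := interp_dist (- r) N δ_gt0 f_lip (rescale_relu_dist k_gt0 (@softplus_relu_dist R)) x.
move/le_trans; apply; have L1 : 0 < L + 1 by rewrite ltr_wpDl.
have -> : N%:R * (L * (2 * (1 / k))) = eps * (L / (L + 1)).
  by rewrite /k; field; rewrite !lt0r_neq0 ?ltr0n.
by rewrite ler_piMr ?(ltW eps_gt0) // ler_pdivrMr // mul1r lerDl.
Qed.

Lemma softplus_net_dist_in x : `|x| <= r -> `|G x - f x| <= eps + L * δ.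
Proof.
move=> xr; apply: le_trans (ler_distD (interp f (- r) δ N relu x) _ _) _.
by rewrite lerD ?G_relu_dist // relu_interp_dist_in // last_knot -ler_norml.
Qed.

Lemma softplus_net_dist_out x : r < `|x| -> `|G x - f x| <= eps + L * `|x|.
Proof.
move=> rx; apply: le_trans (ler_distD (interp f (- r) δ N relu x) _ _) _.
rewrite lerD ?G_relu_dist //; apply: relu_interp_dist_out => //.
- by rewrite oppr_le0 ltW.
- by rewrite last_knot ltW.
by move: rx; rewrite last_knot ltr_normr ltrNr => /orP[] /ltW ->; rewrite ?orbT.
Qed.
End SymmetricGrid.

Lemma powR_div (R : realType) (x y p : R) : 0 <= x -> 0 < y ->
  (x / y) `^ p = x `^ p * y `^ (- p).
Proof.
move=> x0 y0; rewrite -[in RHS](divfK (lt0r_neq0 y0) x).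
rewrite (powRM _ (divr_ge0 x0 (ltW y0)) (ltW y0)) powRN mulfK // lt0r_neq0 //.
exact: powR_gt0.
Qed.

Lemma grid_parameters (R : realType) (L eps q A : R) :
  0 < eps -> 0 <= L -> 1 < q -> 1 <= A -> 2 * L <= eps * A ->
  exists (r : R) (N : nat), [/\ 0 < r, (0 < N)%N, N%:R <= A `^ (q / (q - 1)) + 1,
    L * (2 * r / N%:R) <= eps & forall x : R, r <= `|x| -> L * `|x| <= eps * `|x| `^ q].
Proof.
move=> eps0 L0 q1 A1 LA; have q10 : 0 < q - 1 by rewrite subr_gt0.
have A0 : 0 < A := lt_le_trans ltr01 A1.
set r := A `^ (q - 1)^-1.
have r1 : 1 <= r by rewrite -(powRr0 A) ler_powR // invr_ge0 ltW.
have r0 : 0 < r := lt_le_trans ltr01 r1.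
have rA : r * A = A `^ (q / (q - 1)).
  have -> : q / (q - 1) = (q - 1)^-1 + 1 by field; rewrite lt0r_neq0.
  by rewrite powRD ?lt0r_neq0 ?implybT // powRr1 // ltW.
have LrA : L * (2 * r) <= eps * (r * A) by have := ltW r0; nra.
exists r, (Num.truncn (r * A)).+1; split => //.
- by rewrite -rA -addn1 natrD lerD2r truncn_le mulr_ge0 // ltW.
- rewrite mulrA ler_pdivrMr ?ltr0n // (le_trans LrA) // ler_wpM2l ?(ltW eps0) //.
  by rewrite ltW // real_truncnS_gt // num_real.
move=> x rx; have x0 : 0 < `|x| := lt_le_trans r0 rx.
have -> : `|x| `^ q = `|x| `^ (q - 1) * `|x|.
  by rewrite -{3}(powRr1 (ltW x0)) -powRD ?subrK // lt0r_neq0 ?implybT.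
have Ax : A <= `|x| `^ (q - 1).
  have <- : r `^ (q - 1) = A by rewrite -powRrM mulVf ?lt0r_neq0 // powRr1 // ltW.
  by rewrite ge0_ler_powR ?nnegrE ?normr_ge0 ?(ltW q10) ?(ltW r0).
rewrite mulrA ler_wpM2r //; apply: le_trans (ler_wpM2l (ltW eps0) Ax).
by apply: le_trans LA; lra.
Qed.

Theorem mainTheorem18 (R : realType) (eps L q : R) (f a : R -> R)
  (heps0 : 0 < eps) (heps1 : eps <= 1) (hL : 0 <= L) (hq : 1 < q)
  (hf : forall x y : R, `|f x - f y| <= L * `|x - y|)
  (ha_cont : continuous a)
  (ha : forall x : R, a x = ln (1 + expR x)) :
  exists G : net R 1 1,
    continuous (realization11 a G) /\
        nhidden G = 1%N /\
        (forall x y : R,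
            `|realization11 a G x - realization11 a G y| <= L * `|x - y|) /\
        (forall x : R,
            `|realization11 a G x - f x| <= 2 * eps * Num.max 1 (`|x| `^ q)) /\
        ((dim1 G)%:R <= 2 * (Num.max 1 (2 * L)) `^ (q / (q - 1))
                         * eps `^ (- (q / (q - 1))) + 1) /\
        (nparams G = 3 * dim1 G + 1)%N /\
        ((nparams G)%:R <= 12 * (Num.max 1 (2 * L)) `^ (q / (q - 1))
                             * eps `^ (- (q / (q - 1)))).
Proof.
set M := Num.max 1 (2 * L); set p := q / (q - 1).
have M1 : 1 <= M by rewrite le_max lexx.
have A1 : 1 <= M / eps by rewrite ler_pdivlMr // mul1r (le_trans heps1).
have LA : 2 * L <= eps * (M / eps) by rewrite [eps * _]mulrC mulfVK ?lt0r_neq0 // le_max lexx orbT.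
have C1 : 1 <= (M / eps) `^ p.
  by rewrite -(powRr0 (M / eps)) ler_powR // divr_ge0 ?subr_ge0 ?ltW // (lt_trans ltr01).
have [r [N [r0 N0 NC Lδ Lx]]] := grid_parameters heps0 hL hq A1 LA.
rewrite -!mulrA -powR_div ?(le_trans ler01 M1) //; set C := (M / eps) `^ p in C1 NC *.
exists (softplus_net f (- r) (2 * r / N%:R) N (2 * N%:R * (L + 1) / eps)).
have G_lip := softplus_net_lipschitz ha heps0 hL r0 N0 hf.
split; first exact: lipschitz_continuous hL G_lip.
split; first by [].
split; first exact: G_lip.
split.
  move=> x; set m := Num.max 1 (`|x| `^ q).
  have em : eps <= eps * m by rewrite ler_peMr ?le_max ?lexx // ltW.
  have eqm : eps * `|x| `^ q <= eps * m by rewrite ler_wpM2l ?le_max ?lexx ?orbT // ltW.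
  case: (leP `|x| r) => xr.
    by apply: le_trans (softplus_net_dist_in ha heps0 hL r0 N0 hf xr) _; lra.
  apply: le_trans (softplus_net_dist_out ha heps0 hL r0 N0 hf xr) _.
  by have := Lx x (ltW xr); lra.
rewrite nparams_softplus_net /= -addn1 !natrD; split; [lra | split => //; lra].
Qed.
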